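(* Let $q \ge 2$, $n$, $a$, $b$ be nonnegative integers with $b \ge 1$ and $a + qb \le n - 1$. Then $\kappa^*(A_{q,n,a,b}) \le \kappa^*(A_{q,n,a+2,b-1})$.
   Context: For integers $q \ge 2$, $n \ge 1$, $0 \le a \le n$, $b \ge 0$, the $q$-ary $n$-symbol $a$-erasure $b$-substitution channel $A_{q,n,a,b}$ has input set $[q]^n$ (where $[q]=\{0,\dots,q-1\}$) and output set the strings $y \in ([q]\cup\{*\})^n$ having exactly $a$ positions equal to the erasure symbol $*$; $(A_{q,n,a,b})_{x,y} = 1$ iff $|\{i : y_i \ne *,\ y_i \ne x_i\}| \le b$. For a $0/1$ matrix $A \in \{0,1\}^{X\times Y}$, $\kappa^*(A) = \min\{\mathbf{1}^T z : z\in \mathbb{R}^Y,\ z\ge\mathbf{0},\ Az\ge\mathbf{1}\}$. *)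

From mathcomp Require Import all_boot all_order all_algebra.
From mathcomp Require Import all_classical all_reals.
Set Implicit Arguments. Unset Strict Implicit. Unset Printing Implicit Defensive.
Import Order.TTheory GRing.Theory Num.Theory.
Local Open Scope ring_scope.
Local Open Scope classical_set_scope.

Definition inT (q n : nat) : finType := {ffun 'I_n -> 'I_q}.

(* Output set: strings over [q] ∪ {*} (None = erasure symbol * ) with exactly a erasures. *)
Definition outT (q n a : nat) : finType :=
  {y : {ffun 'I_n -> option 'I_q} | #|[set i | y i == None]| == a}.

Definition chan (q n a b : nat) (x : inT q n) (y : outT q n a) : bool :=
  (#|[set i | (val y i != None) && (val y i != Some (x i))]| <= b)%N.

Definition kappa_star (R : realType) (X Y : finType) (A : X -> Y -> bool) : R :=
  inf [set s : R | exists z : Y -> R,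
        (forall y, 0 <= z y) /\
        (forall x, 1 <= \sum_(y : Y) (A x y)%:R * z y) /\
        s = \sum_(y : Y) z y].

From mathcomp Require Import all_boot all_order all_algebra.
From mathcomp Require Import all_classical all_reals.
From mathcomp Require Import zify.
Set Implicit Arguments. Unset Strict Implicit. Unset Printing Implicit Defensive.
Import Order.TTheory GRing.Theory Num.Theory.

(* Let V(m, b) = sum_(k <= b) C(m, k) r^k, with r = q - 1, be the size of a Hamming
   ball of radius b in [q]^m.  Putting weight 1/V(n-a, b) on every output with a fixed
   erasure pattern is a fractional cover, since each input reaches exactly V(n-a, b)
   of them: kappa* <= q^(n-a) / V(n-a, b).  Conversely each output is reached by exactly
   q^a V(n-a, b) inputs, so double counting gives kappa* >= q^n / (q^a V(n-a, b)).
   Comparing the upper bound for (a, b) with the lower bound for (a+2, b-1) leaves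
   q^2 V(m, b-1) <= V(m+2, b); by Pascal's rule applied twice the difference is
   r^b (C(m, b) - r C(m, b-1)), which is nonnegative as soon as q b <= m + 1. *)

Definition hamming_vol (r m b : nat) : nat := \sum_(k < b.+1) 'C(m, k) * r ^ k.

Lemma hamming_vol0 r m : hamming_vol r m 0 = 1.
Proof. by rewrite /hamming_vol big_ord1 bin0 muln1. Qed.

Lemma hamming_vol_gt0 r m b : 0 < hamming_vol r m b.
Proof. by rewrite /hamming_vol big_ord_recl bin0 expn0. Qed.

Lemma hamming_vol_radiusS r m b :
  hamming_vol r m b.+1 = hamming_vol r m b + 'C(m, b.+1) * r ^ b.+1.
Proof. by rewrite /hamming_vol big_ord_recr. Qed.

Lemma hamming_vol_pascal r m b :
  hamming_vol r m.+1 b.+1 = hamming_vol r m b.+1 + r * hamming_vol r m b.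
Proof.
rewrite /hamming_vol big_ord_recl [in RHS]big_ord_recl !bin0 big_distrr -addnA.
congr (_ + _); rewrite -big_split; apply: eq_bigr => k _ /=.
by rewrite /bump leq0n add1n binS mulnDl expnS; lia.
Qed.

Lemma hamming_vol_lengthS r m b :
  hamming_vol r m.+1 b + 'C(m, b) * r ^ b.+1 = r.+1 * hamming_vol r m b.
Proof.
case: b => [|b]; first by rewrite !hamming_vol0 bin0 mul1n expn1 muln1; lia.
by rewrite hamming_vol_pascal hamming_vol_radiusS mulnDr mulSn !expnS; lia.
Qed.

Lemma leq_mul_bin r m b : r.+1 * b.+1 <= m.+1 -> r * 'C(m, b) <= 'C(m, b.+1).
Proof.
move=> hm; rewrite -(leq_pmul2l (ltn0Sn b)) mul_bin_left mulnA leq_mul2r.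
by apply/orP; right; lia.
Qed.

Lemma leq_hamming_vol_add2 r m b : r.+1 * b.+1 <= m.+1 ->
  r.+1 ^ 2 * hamming_vol r m b <= hamming_vol r m.+2 b.+1.
Proof.
move=> /leq_mul_bin le_bin; rewrite hamming_vol_pascal.
have := hamming_vol_lengthS r m b.+1; rewrite (hamming_vol_radiusS r m b).
have := hamming_vol_lengthS r m b.
set W := hamming_vol r m b; set x := r ^ b.+1.
have le_r : r * ('C(m, b) * x) <= 'C(m, b.+1) * x by rewrite mulnA leq_mul2r le_bin orbT.
rewrite expnS; nia.
Qed.

Lemma card_ffun_family (I T : finType) (F : I -> pred T) :
  #|[set f : {ffun I -> T} | [forall i, F i (f i)]]| = \prod_i #|F i|.
Proof.
have := @card_family I (fun _ => T) F.
rewrite foldrE big_map big_enum /= => <-.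
by apply: eq_card => f; rewrite inE; apply/forallP/familyP.
Qed.

Lemma sum_subsets_card_le (I : finType) (C : {set I}) r b :
  \sum_(S : {set I} | (S \subset C) && (#|S| <= b)) r ^ #|S| = hamming_vol r #|C| b.
Proof.
rewrite (partition_big (fun S : {set I} => inord #|S| : 'I_b.+1) xpredT) //.
apply: eq_bigr => k _; rewrite (eq_bigr (fun _ => r ^ k)); last first.
  by move=> S /andP[/andP[_ Sb] /eqP <-]; rewrite inordK.
rewrite sum_nat_const -cards_draws; congr (_ * _).
apply: eq_card => S; rewrite unfold_in [in RHS]inE /=.
case: (S \subset C) => //=; apply/idP/idP.
- by case/andP => Sb /eqP <-; rewrite inordK.
- move/eqP => Sk; have Sb : #|S| <= b by rewrite Sk -ltnS.
  by rewrite Sb; apply/eqP/val_inj; rewrite /= inordK.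
Qed.

Lemma sum_subsets_prod (I : finType) (E : {set I}) (c r b : nat) :
  \sum_(S : {set I} | #|S| <= b)
     \prod_i (if i \in S then (if i \in E then 0 else r) else (if i \in E then c else 1))
  = c ^ #|E| * hamming_vol r #|~: E| b.
Proof.
rewrite -sum_subsets_card_le big_distrr (bigID (fun S : {set I} => S \subset ~: E)) /=.
rewrite [X in _ + X]big1 ?addn0; last first.
  move=> S /andP[_ /subsetPn[i iS]]; rewrite inE negbK => iE.
  by rewrite (bigD1 i) //= iS iE.
rewrite [RHS](eq_bigl (fun S : {set I} => (#|S| <= b) && (S \subset ~: E))); last first.
  by move=> S; rewrite andbC.
apply: eq_bigr => S /andP[_ sSE].
rewrite (eq_bigr (fun i => (if i \in S then r else 1) * (if i \in E then c else 1))).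
  by rewrite big_split /= -!big_mkcond /= !prod_nat_const mulnC.
move=> i _; case: (boolP (i \in S)) => [iS|_]; last by rewrite mul1n.
by move: (fintype.subsetP sSE i iS); rewrite inE => /negbTE ->; rewrite muln1.
Qed.

Section BoundedFunctions.
Variables (I T : finType) (P Q : I -> pred T).
Hypothesis disjPQ : forall i v, P i v -> ~~ Q i v.

Lemma card_ffun_fewQ b :
  #|[set f : {ffun I -> T} | [forall i, P i (f i) || Q i (f i)]
                             & #|[set i | Q i (f i)]| <= b]|
  = \sum_(S : {set I} | #|S| <= b) \prod_i (if i \in S then #|Q i| else #|P i|).
Proof.
rewrite -sum1_card (partition_big (fun f : {ffun I -> T} => [set i | Q i (f i)])
  (fun S : {set I} => #|S| <= b)); last by move=> f; rewrite inE => /andP[].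
apply: eq_bigr => S Sb.
rewrite (eq_bigr (fun i => #|if i \in S then Q i else P i|)); last by move=> i; case: ifP.
rewrite sum1_card -card_ffun_family; apply: eq_card => f.
rewrite unfold_in [in LHS]inE [in RHS]inE /=.
apply/idP/forallP.
- case/andP => /andP[/forallP PQf _] /eqP <- i; rewrite inE.
  by case: ifP => // nQ; have := PQf i; rewrite nQ orbF.
- move=> PQS; have suppQ : [set i | Q i (f i)] = S.
    apply/setP => i; rewrite inE; have := PQS i.
    by case: (i \in S) => // /disjPQ /negbTE.
  rewrite suppQ Sb eqxx !andbT; apply/forallP => i.
  by have := PQS i; case: (i \in S) => ->; rewrite ?orbT.
Qed.

Lemma card_ffun_ball (E : {set I}) c r b :
  (forall i, #|P i| = if i \in E then c else 1) ->
  (forall i, #|Q i| = if i \in E then 0 else r) ->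
  #|[set f : {ffun I -> T} | [forall i, P i (f i) || Q i (f i)]
                             & #|[set i | Q i (f i)]| <= b]|
  = c ^ #|E| * hamming_vol r #|~: E| b.
Proof.
move=> cardP cardQ; rewrite card_ffun_fewQ -sum_subsets_prod.
by apply: eq_bigr => S _; apply: eq_bigr => i _; rewrite cardP cardQ.
Qed.

End BoundedFunctions.

(* [outT] and [chan] count elements of classical sets. *)
Lemma card_classic_set (T : finType) (p : pred T) :
  #|[set x | p x]%classic| = #|[set x | p x]|.
Proof. by apply: eq_card => x; rewrite [RHS]inE /in_mem /mem /= /in_set asboolb. Qed.

Section Channel.
Variables (q n : nat).

Definition erasures a (y : outT q n a) : {set 'I_n} := [set i | val y i == None].

Lemma card_erasures a (y : outT q n a) : #|erasures y| = a.
Proof. by apply/eqP; rewrite -card_classic_set; exact: valP y. Qed.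

Lemma card_setC_ord (E : {set 'I_n}) : #|~: E| = n - #|E|.
Proof. by have := cardsC E; rewrite card_ord; lia. Qed.

Lemma card_chan_col a b (y : outT q n a) :
  #|[set x | chan b x y]| = q ^ a * hamming_vol q.-1 (n - a) b.
Proof.
transitivity (q ^ #|erasures y| * hamming_vol q.-1 #|~: erasures y| b).
  2: by rewrite card_setC_ord card_erasures.
pose P i (v : 'I_q) := (val y i == None) || (val y i == Some v).
pose Q i (v : 'I_q) := (val y i != None) && (val y i != Some v).
have disjPQ i v : P i v -> ~~ Q i v by rewrite /P /Q negb_and !negbK.
rewrite -(card_ffun_ball disjPQ b (c := q) (r := q.-1)).
- apply: eq_card => x; rewrite !inE /chan card_classic_set.
  have -> // : [forall i, P i (x i) || Q i (x i)].
  by apply/forallP => i; rewrite /P /Q; do 2!case: eqP.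
- move=> i; rewrite inE /P; case: (val y i) => [u|] /=; last by rewrite -[q in RHS]card_ord.
  by rewrite -(card1 u); apply: eq_card => v; rewrite !unfold_in /= (inj_eq Some_inj) eq_sym.
- move=> i; rewrite inE /Q; case: (val y i) => [u|] /=; last exact: eq_card0.
  rewrite -[q in q.-1]card_ord -(cardC1 u); apply: eq_card => v.
  by rewrite !unfold_in /= (inj_eq Some_inj) eq_sym.
Qed.

Lemma card_outT_val a (p : pred {ffun 'I_n -> option 'I_q}) :
  (forall f, p f -> #|[set i | f i == None]| = a) ->
  #|[set y : outT q n a | p (val y)]| = #|[set f | p f]|.
Proof.
move=> erase_p; rewrite -(card_imset _ val_inj); apply: eq_card => f.
rewrite inE; apply/imsetP/idP => [[y] | pf]; first by rewrite inE => py ->.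
have erase_f : #|[set i | f i == None]%classic| == a by rewrite card_classic_set erase_p.
by exists (exist _ f erase_f); rewrite ?inE.
Qed.

Lemma card_erasures_eq a (E : {set 'I_n}) : #|E| = a ->
  #|[set y : outT q n a | erasures y == E]| = q ^ (n - a).
Proof.
move=> <-; rewrite -card_setC_ord.
rewrite (@card_outT_val _ (fun f => [set i | f i == None] == E)); last by move=> f /eqP ->.
pose F i (v : option 'I_q) := if i \in E then v == None else v != None.
transitivity #|[set f : {ffun 'I_n -> option 'I_q} | [forall i, F i (f i)]]|.
  apply: eq_card => f; rewrite !inE /F; apply/eqP/forallP => [<- i | Ff].
    by rewrite inE; case: (f i).
  by apply/setP => i; rewrite inE; have := Ff i; case: (i \in E); case: (f i).
rewrite card_ffun_family -prod_nat_const [RHS]big_mkcond /=.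
apply: eq_bigr => i _; rewrite /F inE; case: (i \in E) => /=.
  by rewrite -(card1 (None : option 'I_q)); apply: eq_card => v; rewrite !unfold_in.
transitivity #|predC1 (None : option 'I_q)|; first exact: eq_card.
by rewrite cardC1 card_option card_ord.
Qed.

Lemma card_chan_row a b (x : inT q n) (E : {set 'I_n}) : #|E| = a ->
  #|[set y : outT q n a | (erasures y == E) && chan b x y]| = hamming_vol q.-1 (n - a) b.
Proof.
move=> <-; rewrite -card_setC_ord -[hamming_vol _ _ _]mul1n -(exp1n #|E|).
pose P i (v : option 'I_q) := if i \in E then v == None else v == Some (x i).
pose Q i (v : option 'I_q) := (i \notin E) && (v != None) && (v != Some (x i)).
have disjPQ i v : P i v -> ~~ Q i v.
  by rewrite /P /Q; case: (i \in E) => // /eqP ->; rewrite eqxx andbF.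
have erasePQ (f : {ffun 'I_n -> option 'I_q}) :
    [forall i, P i (f i) || Q i (f i)] = ([set i | f i == None] == E).
  apply/forallP/eqP => [PQf | eE i]; last first.
    by rewrite /P /Q -eE inE; case: (f i) => //= u; case: eqP.
  apply/setP => i; rewrite inE; have := PQf i; rewrite /P /Q.
  by case: (i \in E); case: (f i) => [u|]; rewrite ?orbF ?andbT.
rewrite -(card_ffun_ball disjPQ b (c := 1) (r := q.-1)).
- rewrite -(@card_outT_val #|E|) => [|f]; last by rewrite erasePQ => /andP[/eqP <-].
  apply: eq_card => y; rewrite !inE /chan card_classic_set erasePQ.
  case: eqP => //= eraseE; congr (_ <= _); apply: eq_card => i.
  by move/setP/(_ i): eraseE; rewrite !inE /Q => <-; case: (val y i).
- move=> i; rewrite /P; case: (i \in E).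
    by rewrite -(card1 (None : option 'I_q)); apply: eq_card => v; rewrite !unfold_in.
  by rewrite -(card1 (Some (x i))); apply: eq_card => v; rewrite !unfold_in.
- move=> i; rewrite /Q; case: (i \in E) => /=; first exact: eq_card0.
  transitivity #|[predD1 predC1 None & Some (x i)]|.
    by apply: eq_card => v; rewrite !inE andbC.
  have := cardD1 (Some (x i)) (predC1 None); rewrite cardC1 card_option card_ord inE /=.
  by move/(congr1 predn)/esym; rewrite add1n.
Qed.

End Channel.

Lemma sum_nat_of_bool (T : finType) (p : pred T) : \sum_(x : T) p x = #|[set x | p x]|.
Proof. by rewrite -sum1dep_card [RHS]big_mkcond; apply: eq_bigr => x; case: (p x). Qed.

Local Open Scope ring_scope.

Section FractionalCover.
Variables (R : realType) (X Y : finType) (A : X -> Y -> bool).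

Definition fractional_cover (z : Y -> R) :=
  (forall y, 0 <= z y) /\ (forall x, 1 <= \sum_y (A x y)%:R * z y).

Lemma kappa_star_le_cover z : fractional_cover z -> kappa_star R A <= \sum_y z y.
Proof.
case=> z_ge0 cover; apply: ge_inf; last by exists z.
by exists 0 => _ [z' [z'_ge0 [_ ->]]]; apply: sumr_ge0 => y _.
Qed.

Lemma fractional_cover_uniform (Y0 : {set Y}) (d : nat) : (0 < d)%N ->
  (forall x, (d <= #|[set y in Y0 | A x y]|)%N) ->
  fractional_cover (fun y => (y \in Y0)%:R / d%:R).
Proof.
move=> d_gt0 rows; split=> [y | x]; first by rewrite divr_ge0 ?ler0n.
under eq_bigr => y _ do rewrite mulrA -natrM mulnb andbC.
rewrite -mulr_suml -natr_sum sum_nat_of_bool ler_pdivlMr ?ltr0n // mul1r ler_nat.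
exact: rows.
Qed.

Lemma kappa_star_le_uniform (Y0 : {set Y}) (d : nat) : (0 < d)%N ->
  (forall x, (d <= #|[set y in Y0 | A x y]|)%N) ->
  kappa_star R A <= #|Y0|%:R / d%:R.
Proof.
move=> d_gt0 rows.
apply: le_trans (kappa_star_le_cover (fractional_cover_uniform d_gt0 rows)) _.
rewrite -mulr_suml -natr_sum sum_nat_of_bool.
by rewrite (eq_card (B := Y0)) // => y; rewrite inE.
Qed.

Lemma card_le_cover_weight (d : nat) z : fractional_cover z ->
  (forall y, (#|[set x | A x y]| <= d)%N) -> #|X|%:R <= d%:R * \sum_y z y.
Proof.
move=> [z_ge0 cover] cols; rewrite -sum1_card natr_sum.
apply: le_trans (ler_sum _ (fun x _ => cover x)) _.
rewrite exchange_big mulr_sumr; apply: ler_sum => y _.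
by rewrite -mulr_suml -natr_sum sum_nat_of_bool ler_wpM2r // ler_nat.
Qed.

Lemma card_div_le_kappa_star (d : nat) : (0 < d)%N -> (exists z, fractional_cover z) ->
  (forall y, (#|[set x | A x y]| <= d)%N) -> #|X|%:R / d%:R <= kappa_star R A.
Proof.
move=> d_gt0 [z [z_ge0 cover]] cols; apply: lb_le_inf; first by exists (\sum_y z y), z.
move=> _ [z' [z'_ge0 [cover' ->]]]; rewrite ler_pdivrMr ?ltr0n // mulrC.
exact: card_le_cover_weight.
Qed.

End FractionalCover.

Lemma exists_set_card (T : finType) k : (k <= #|T|)%N -> exists E : {set T}, #|E| = k.
Proof.
move=> le_kT; have : (0 < #|[set E : {set T} | #|E| == k]|)%N by rewrite card_draws bin_gt0.
by case/card_gt0P => E; rewrite inE => /eqP; exists E.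
Qed.

Section ChannelBounds.
Variables (R : realType) (q n a b : nat).
Hypothesis le_an : (a <= n)%N.

Lemma exists_erasure_pattern : exists2 E : {set 'I_n}, #|E| = a & forall x : inT q n,
  (hamming_vol q.-1 (n - a) b
     <= #|[set y in [set y : outT q n a | erasures y == E] | chan b x y]|)%N.
Proof.
have [E cardE] := @exists_set_card 'I_n a ltac:(by rewrite card_ord).
exists E => // x; rewrite -(card_chan_row b x cardE); apply/eq_leq/eq_card => y.
by rewrite !inE.
Qed.

Lemma kappa_star_chan_le :
  kappa_star R (@chan q n a b) <= (q ^ (n - a))%:R / (hamming_vol q.-1 (n - a) b)%:R.
Proof.
have [E cardE rows] := exists_erasure_pattern.
rewrite -(card_erasures_eq q cardE).
exact: kappa_star_le_uniform (hamming_vol_gt0 _ _ _) rows.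
Qed.

Lemma kappa_star_chan_ge : (0 < q)%N ->
  (q ^ n)%:R / (q ^ a * hamming_vol q.-1 (n - a) b)%:R <= kappa_star R (@chan q n a b).
Proof.
move=> q_gt0; have [E _ rows] := exists_erasure_pattern.
have vol_gt0 := hamming_vol_gt0 q.-1 (n - a) b.
have card_inT : #|inT q n| = (q ^ n)%N by rewrite card_ffun !card_ord.
rewrite -card_inT; apply: card_div_le_kappa_star; first by rewrite muln_gt0 expn_gt0 q_gt0.
  by eexists; exact: fractional_cover_uniform vol_gt0 rows.
by move=> y; rewrite card_chan_col.
Qed.

End ChannelBounds.

Theorem lemma6 (R : realType) (q n a b : nat) :
  (2 <= q)%N -> (1 <= b)%N -> (a + q * b <= n - 1)%N ->
  kappa_star R (@chan q n a b) <= kappa_star R (@chan q n a.+2 b.-1).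
Proof.
move=> q_ge2 b_ge1 hab.
have q_gt0 : (0 < q)%N by apply: ltnW.
have le_a2n : (a.+2 <= n)%N by nia.
have [m n_eq] : exists m, (n - a = m.+2)%N by exists (n - a.+2)%N; lia.
case: b b_ge1 hab => // c _ hab.
apply: le_trans (kappa_star_chan_le R q c.+1 (ltnW (ltnW le_a2n))) _.
apply: le_trans (kappa_star_chan_ge R c le_a2n q_gt0).
have n_eq2 : (n - a.+2 = m)%N by lia.
have vol_le := @leq_hamming_vol_add2 q.-1 m c ltac:(rewrite prednK //; lia).
rewrite prednK // in vol_le.
rewrite n_eq n_eq2 ler_pdivrMr ?ltr0n ?hamming_vol_gt0 // mulrAC ler_pdivlMr; last first.
  by rewrite ltr0n muln_gt0 expn_gt0 q_gt0 hamming_vol_gt0.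
rewrite -!natrM ler_nat -(subnKC (ltnW (ltnW le_a2n))) n_eq.
apply: leq_trans (leq_mul (leqnn _) vol_le).
by rewrite mulnA [X in (_ <= X)%N]mulnA -!expnD (_ : m.+2 + a.+2 = a + m.+2 + 2)%N //; lia.
Qed.
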